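(* Let $t\ge 1$ and $n=t+1$. The gadget $\mathtt{SecCondAdd}$ defined below is $t$-SNI secure. $\mathtt{SecCondAdd}$ takes as input Boolean sharings $(\mathbf{x}_i)_{1\le i\le n}$ and $(\mathbf{y}_i)_{1\le i\le n}$ of vectors $\mathbf{x},\mathbf{y}\in\mathbb{F}_q^l$ and a Boolean sharing $(b_i)_{1\le i\le n}$ of a bit $b\in\{0,1\}$, and outputs a Boolean sharing $(\mathbf{s}_i)$ of $\mathbf{s}=\mathbf{x}+b\cdot\mathbf{y}$, computed as follows: for $j=1,\dots,l$: 1. $(\mathbf{a}[j]_i) := \mathtt{SecAND}((\mathbf{y}[j]_i),(b_i^{[w:1]}))$, where $b_i^{[w:1]}$ denotes the $w$-bit word (with $w=\lceil\log_2 q\rceil$) obtained by replicating the bit $b_i$ to all $w$ bit positions; 2. $(\mathbf{s}[j]_i) := (\mathbf{x}[j]_i+\mathbf{a}[j]_i)$ (share-wise addition); 3. $(\mathbf{s}[j]_i) := \mathtt{StrongRefresh}((\mathbf{s}[j]_i))$. Return $(\mathbf{s}_i)$.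
   Context: Field elements of $\mathbb{F}_q$ are represented as $w$-bit words, $w=\lceil\log_2 q\rceil$. A Boolean sharing of $x$ is a tuple $(x_1,\dots,x_n)$ with $x=x_1+\cdots+x_n$ where $+$ is the (bitwise XOR) addition; sharings of vectors are coordinate-wise, and $\mathbf{v}[j]$ is the $j$-th coordinate of $\mathbf{v}$. $\mathtt{SecAND}$ is a masked bitwise AND gadget on Boolean sharings (the instance over $\mathrm{GF}(2)$ of the ISW masked multiplication $\mathtt{SecMult}$), which is $t$-SNI. $\mathtt{StrongRefresh}((x_i))$: set $y_i:=x_i$; for $i=1,\dots,n$ and $j=i+1,\dots,n$: sample $r$ uniformly from $\mathbb{F}_q$, set $y_i:=y_i+r$, $y_j:=y_j-r$; return $(y_i)$ (this gadget is $t$-SNI). Probing model: an adversary may place probes on intermediate values (internal wires) of a gadget and on its output shares. A gadget with one output sharing and some input sharings is $t$-NI (resp. $t$-SNI) secure if any set of at most $t_1$ probes on internal wires and $t_2$ probes on output shares, with $t_1+t_2\le t$, can be perfectly simulated using at most $t_1+t_2$ (resp. $t_1$) shares of each of its input sharings. *)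

From mathcomp Require Import all_boot.
Set Implicit Arguments. Unset Strict Implicit. Unset Printing Implicit Defensive.

(* w-bit words with bitwise XOR (the Boolean-sharing addition) and AND *)
Definition word (w : nat) := {ffun 'I_w -> bool}.

Section Words.
Variable w : nat.
Definition wzero : word w := [ffun _ => false].
Definition wxor (u v : word w) : word w := [ffun k => u k (+) v k].
Definition wand (u v : word w) : word w := [ffun k => u k && v k].
Definition wrep (b : bool) : word w := [ffun _ => b].
Definition wval (u : word w) : nat := \sum_(k < w) u k * 2 ^ k.
End Words.

Definition wlen (q : nat) : nat := up_log 2 q.

Section Gadget.
Variables (n w l : nat).
Local Notation W := (word w).

Definition upd (c : {ffun 'I_n -> W}) (i : 'I_n) (v : W) : {ffun 'I_n -> W} :=
  [ffun k => if k == i then v else c k].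

(* pairs (i,j) with i < j, in the loop order  for i, for j = i+1..n *)
Definition pairs : seq ('I_n * 'I_n) :=
  [seq p : 'I_n * 'I_n <- [seq (i, j) | i <- enum 'I_n, j <- enum 'I_n] | (val p.1 < val p.2)%N].

(* randomness of one SecAND / one StrongRefresh: one uniform word r_(i,j)
   per pair i < j (entries with i >= j are never used) *)
Definition rnd := {ffun 'I_n * 'I_n -> W}.

(* one inner iteration (i,j) of ISW SecAND; every computed value is a wire *)
Definition and_step (a b : 'I_n -> W) (r : rnd)
    (st : {ffun 'I_n -> W} * seq W) (p : 'I_n * 'I_n) :=
  let: (c, tr) := st in
  let: (i, j) := p in
  let rr := r (i, j) in
  let abij := wand (a i) (b j) in
  let t1 := wxor rr abij in
  let abji := wand (a j) (b i) in
  let rr' := wxor t1 abji in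
  let ci := wxor (c i) rr in
  let c1 := upd c i ci in
  let cj := wxor (c1 j) rr' in
  (upd c1 j cj, tr ++ [:: rr; abij; t1; abji; rr'; ci; cj]).

Definition SecAND (a b : 'I_n -> W) (r : rnd) : {ffun 'I_n -> W} * seq W :=
  foldl (and_step a b r)
        ([ffun i => wand (a i) (b i)], [seq wand (a i) (b i) | i <- enum 'I_n])
        pairs.

Definition ref_step (r : rnd) (st : {ffun 'I_n -> W} * seq W) (p : 'I_n * 'I_n) :=
  let: (y, tr) := st in
  let: (i, j) := p in
  let rr := r (i, j) in
  let yi := wxor (y i) rr in
  let y1 := upd y i yi in
  let yj := wxor (y1 j) rr in
  (upd y1 j yj, tr ++ [:: rr; yi; yj]).

Definition StrongRefresh (x : {ffun 'I_n -> W}) (r : rnd) :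
    {ffun 'I_n -> W} * seq W :=
  foldl (ref_step r) (x, [::]) pairs.

(* inputs of SecCondAdd: share i of x (a vector in W^l), share i of y,
   share i of the bit b *)
Definition vec := {ffun 'I_l -> W}.
Definition inputs := ({ffun 'I_n -> vec} * {ffun 'I_n -> vec} * {ffun 'I_n -> bool})%type.
(* the gadget's randomness: for each coordinate j, one SecAND and one
   StrongRefresh randomness; it is drawn uniformly from this finite type *)
Definition grnd := {ffun 'I_l -> rnd * rnd}.

Definition coord (inp : inputs) (rho : grnd) (j : 'I_l) :
    {ffun 'I_n -> W} * seq W :=
  let: (xs, ys, bs) := inp in
  let bw := [seq wrep w (bs i) | i <- enum 'I_n] in
  let: (a, trA) := SecAND (fun i => ys i j) (fun i => wrep w (bs i)) (rho j).1 in
  let s := [ffun i => wxor (xs i j) (a i)] in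
  let: (s', trR) := StrongRefresh s (rho j).2 in
  (s', bw ++ trA ++ [seq s i | i <- enum 'I_n] ++ trR).

Definition SecCondAdd_out (inp : inputs) (rho : grnd) : {ffun 'I_n -> vec} :=
  [ffun i => [ffun j => (coord inp rho j).1 i]].

Definition SecCondAdd_wires (inp : inputs) (rho : grnd) : seq W :=
  flatten [seq (coord inp rho j).2 | j <- enum 'I_l].

(* what the adversary sees: internal probes P (positions in the wire
   list) and output probes O (indices of output shares) *)
Definition observe (P : seq nat) (O : seq 'I_n) (inp : inputs) (rho : grnd)
    : seq W * seq vec :=
  ([seq nth (wzero w) (SecCondAdd_wires inp rho) p | p <- P],
   [seq SecCondAdd_out inp rho i | i <- O]).

Definition agree (Ix Iy Ib : {set 'I_n}) (i1 i2 : inputs) : Prop :=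
  let: (x1, y1, b1) := i1 in let: (x2, y2, b2) := i2 in
  [/\ forall i, i \in Ix -> x1 i = x2 i,
      forall i, i \in Iy -> y1 i = y2 i &
      forall i, i \in Ib -> b1 i = b2 i].

End Gadget.

(* decoding of a Boolean sharing of a vector, and validity as F_q^l *)
Definition decode (n w l : nat) (xs : {ffun 'I_n -> vec w l}) (j : 'I_l) : word w :=
  \big[@wxor w/wzero w]_(i < n) xs i j.

Definition valid_input (n q l : nat) (inp : inputs n (wlen q) l) : Prop :=
  let: (xs, ys, _) := inp in
  forall j : 'I_l, (wval (decode xs j) < q)%N /\ (wval (decode ys j) < q)%N.

(* t-SNI of SecCondAdd with n shares over F_q, vectors of length l:
   for every t1 internal probes and t2 output probes with t1 + t2 <= t,
   there are sets of at most t1 share indices of each input sharing and a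
   (randomized, uniform over a nonempty finite type) simulator depending on
   the inputs only through those shares, whose output distribution equals
   the distribution of the probed values for every valid input. *)
Definition SecCondAdd_SNI (t n q l : nat) : Prop :=
  forall (P : seq nat) (O : seq 'I_n), (size P + size O <= t)%N ->
  exists (Ix Iy Ib : {set 'I_n}),
    [/\ (#|Ix| <= size P)%N, (#|Iy| <= size P)%N & (#|Ib| <= size P)%N] /\
  exists (S : finType)
         (sim : inputs n (wlen q) l -> S -> seq (word (wlen q)) * seq (vec (wlen q) l)),
    [/\ (0 < #|S|)%N,
        (forall i1 i2, agree Ix Iy Ib i1 i2 -> forall s, sim i1 s = sim i2 s) &
        forall inp, @valid_input n q l inp ->
        forall v,
          (#|[pred rho : grnd n (wlen q) l | observe P O inp rho == v]| * #|S|
           = #|[pred s : S | sim inp s == v]| * #|{: grnd n (wlen q) l}|)%N].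

(** Every probe is charged to at most one share index of each input sharing
    [x], [y] and [b].  For two inputs that agree on the charged shares we
    exhibit a XOR shift of the randomness under which all probed values
    coincide; hence the joint distribution of the probed values depends only
    on the charged shares, and the simulator runs the gadget on the input whose
    other shares are zeroed.

    In each [SecAND] the shift of [r_ij] is the one of the ISW proof: it
    absorbs the difference of [a_i b_j + a_j b_i] (or of [a_i b_j] alone) when
    a probed wire containing [r_ij], or the partial sum [c_j], has to be
    reproduced while [c_i] need not be.  As there are at most [t < n] probes,
    some share index [h] is touched by no probe and is not an output probe;
    the differences on the probed output shares [i] are absorbed into the
    refresh randomness [r_ih], so output probes cost no input share. *)

From HB Require Import structures.
From mathcomp Require Import all_boot zify.
Set Implicit Arguments. Unset Strict Implicit. Unset Printing Implicit Defensive.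

Ltac case_bits :=
  repeat match goal with |- context [@fun_of_fin ?A ?B ?ph ?f ?v] =>
    let e := constr:(@fun_of_fin A B ph f v) in
    let T := type of e in unify T bool; destruct e end.

Ltac bitblast := apply/ffunP => ?; rewrite ?ffunE /=; case_bits; reflexivity.

Section WordXor.
Variable w : nat.
Implicit Types u v z : word w.

Lemma wxorA : associative (@wxor w). Proof. by move=> u v z; bitblast. Qed.
Lemma wxorC : commutative (@wxor w). Proof. by move=> u v; bitblast. Qed.
Lemma wxor0w : left_id (wzero w) (@wxor w). Proof. by move=> u; bitblast. Qed.
Lemma wxorw0 : right_id (wzero w) (@wxor w). Proof. by move=> u; bitblast. Qed.
Lemma wxorK u v : wxor (wxor u v) v = u. Proof. by bitblast. Qed.
Lemma wxorvv u : wxor u u = wzero w. Proof. by bitblast. Qed.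

End WordXor.

HB.instance Definition _ (w : nat) :=
  Monoid.isComLaw.Build (word w) (wzero w) (@wxor w) (@wxorA w) (@wxorC w) (@wxor0w w).

Lemma foldl_pointwise_xor (I : eqType) (J : finType) w
    (f : {ffun J -> word w} -> I -> {ffun J -> word w}) (d : I -> J -> word w) (s : seq I) :
  (forall p c u, p \in s -> f c p u = wxor (c u) (d p u)) ->
  forall c u, foldl f c s u = wxor (c u) (\big[@wxor w/wzero w]_(p <- s) d p u).
Proof.
elim: s => [|x s IH] Hf c u /=; first by rewrite big_nil wxorw0.
rewrite IH => [|p c' u' Hp]; last by apply: Hf; rewrite inE Hp orbT.
by rewrite Hf ?mem_head // big_cons wxorA.
Qed.

Lemma eq_foldl (S I : Type) (f g : S -> I -> S) : f =2 g -> foldl f =2 foldl g.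
Proof. by move=> Efg z s; elim: s z => //= x s IH z; rewrite Efg IH. Qed.

Section TracedFold.
Variables (C T I : Type) (f : C -> I -> C) (g : C -> I -> seq T) (K : nat).
Hypothesis size_g : forall c p, size (g c p) = K.

Definition trace_step (st : C * seq T) p := (f st.1 p, st.2 ++ g st.1 p).

Lemma foldl_trace_state c tr s : (foldl trace_step (c, tr) s).1 = foldl f c s.
Proof. by elim: s c tr => //= x s IH c tr; rewrite IH. Qed.

Lemma size_foldl_trace c tr s : size (foldl trace_step (c, tr) s).2 = size tr + K * size s.
Proof.
elim: s c tr => /= [|x s IH] c tr; first by rewrite muln0 addn0.
by rewrite IH size_cat size_g mulnS addnA.
Qed.

Lemma nth_foldl_trace_prefix d c tr s o :
  o < size tr -> nth d (foldl trace_step (c, tr) s).2 o = nth d tr o.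
Proof.
elim: s c tr => //= x s IH c tr Ho.
by rewrite IH ?nth_cat ?Ho // size_cat ltn_addr.
Qed.

Lemma nth_foldl_trace d p0 c tr s m k : m < size s -> k < K ->
  nth d (foldl trace_step (c, tr) s).2 (size tr + K * m + k)
  = nth d (g (foldl f c (take m s)) (nth p0 s m)) k.
Proof.
elim: s m c tr => //= x s IH [|m] c tr Hm Hk.
  rewrite muln0 addn0 nth_foldl_trace_prefix; last by rewrite size_cat size_g ltn_add2l.
  by rewrite nth_cat ltnNge leq_addr /= addKn.
have -> : size tr + K * m.+1 + k = size (tr ++ g c x) + K * m + k.
  by rewrite size_cat size_g mulnS !addnA.
by rewrite IH.
Qed.

End TracedFold.

Definition radd n w (r d : rnd n w) : rnd n w := [ffun p => wxor (r p) (d p)].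

Lemma radd_inj n w (d : rnd n w) : injective (fun r => radd r d).
Proof.
move=> r r' /ffunP E; apply/ffunP => p.
by move: (E p); rewrite !ffunE => Ep; rewrite -(wxorK (r p) (d p)) Ep wxorK.
Qed.

Section Pairs.
Variable n : nat.
Implicit Types (p : 'I_n * 'I_n) (u v : 'I_n).

Lemma mem_pairs p : (p \in pairs n) = (p.1 < p.2).
Proof.
rewrite /pairs mem_filter; case: p => i j /=; case: ltnP => //= _.
by apply/allpairsP; exists (i, j); rewrite !mem_enum.
Qed.

Lemma uniq_pairs : uniq (pairs n).
Proof.
rewrite /pairs filter_uniq // allpairs_uniq ?enum_uniq //.
by move=> [a b] [c d] _ _ [-> ->].
Qed.

Lemma index_pairs_lt p : p \in pairs n -> index p (pairs n) < size (pairs n).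
Proof. by rewrite index_mem. Qed.

Lemma pair_neq p : p \in pairs n -> p.1 != p.2.
Proof. by rewrite mem_pairs; apply: contraTneq => ->; rewrite ltnn. Qed.

Definition touches p u := (p.1 == u) || (p.2 == u).

Definition pair_of u v : 'I_n * 'I_n := if u < v then (u, v) else (v, u).

Lemma pair_of_pairs u v : u != v -> pair_of u v \in pairs n.
Proof.
rewrite mem_pairs /pair_of => Duv; case: (ltngtP u v) => //= Euv.
by move: Duv; rewrite (val_inj Euv) eqxx.
Qed.

Lemma touches_pair_of u v : touches (pair_of u v) u && touches (pair_of u v) v.
Proof. by rewrite /pair_of /touches; case: ifP; rewrite /= !eqxx ?orbT. Qed.

Lemma touches2_pair_of p u v : p \in pairs n -> u != v ->
  touches p u -> touches p v -> p = pair_of u v.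
Proof.
case: p => i j; rewrite mem_pairs /touches /pair_of /= => lt_ij Duv.
case/orP=> /eqP Eu; case/orP=> /eqP Ev; subst => //.
- by rewrite eqxx in Duv.
- by rewrite lt_ij.
- by rewrite ltnNge (ltnW lt_ij).
- by rewrite eqxx in Duv.
Qed.

Definition other p u := if p.1 == u then p.2 else p.1.

Lemma other_touches p u v : u != v -> touches p u -> touches p v -> other p v = u.
Proof.
case: p => i j; rewrite /touches /other /= => Duv.
case: (eqVneq i v) => [->|_] /=; first by rewrite eq_sym (negbTE Duv) => /eqP.
by case/orP=> /eqP // -> /eqP Euv; rewrite Euv eqxx in Duv.
Qed.

End Pairs.

Section Gadgets.
Variables n w : nat.
Local Notation W := (word w).
Implicit Types (a b : 'I_n -> W) (r : rnd n w) (c : {ffun 'I_n -> W}) (p : 'I_n * 'I_n).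

Definition and_state a b r c p := (and_step a b r (c, [::]) p).1.
Definition and_wires a b r c p := (and_step a b r (c, [::]) p).2.
Definition and_init a b : {ffun 'I_n -> W} := [ffun i => wand (a i) (b i)].

Definition cross a b p := wxor (wand (a p.1) (b p.2)) (wand (a p.2) (b p.1)).

Definition and_incr a b r p u :=
  if u == p.1 then r p else if u == p.2 then wxor (r p) (cross a b p) else wzero w.

Lemma SecAND_traced a b r : SecAND a b r =
  foldl (trace_step (and_state a b r) (and_wires a b r))
    (and_init a b, [seq wand (a i) (b i) | i <- enum 'I_n]) (pairs n).
Proof. by apply: eq_foldl => -[c tr] [i j]. Qed.

Lemma size_and_wires a b r c p : size (and_wires a b r c p) = 7.
Proof. by case: p. Qed.

Lemma and_stateE a b r c p u : p.1 != p.2 ->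
  and_state a b r c p u = wxor (c u) (and_incr a b r p u).
Proof.
case: p => i j /= Dij; rewrite /and_state /and_incr /= !ffunE.
case: (eqVneq u j) => [->|Duj]; first by rewrite eq_sym (negbTE Dij) -!wxorA.
by case: (eqVneq u i) => [->|_]; rewrite ?wxorw0.
Qed.

Lemma and_wiresE a b r c p : p.1 != p.2 ->
  and_wires a b r c p =
  [:: r p; wand (a p.1) (b p.2); wxor (r p) (wand (a p.1) (b p.2));
      wand (a p.2) (b p.1); wxor (r p) (cross a b p);
      and_state a b r c p p.1; and_state a b r c p p.2].
Proof.
case: p => i j /= Dij; rewrite /and_wires /and_state /cross /= !ffunE.
by rewrite eqxx [j == i]eq_sym (negbTE Dij) eqxx -wxorA.
Qed.

Lemma and_state_pairs a b r s u : {subset s <= pairs n} ->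
  foldl (and_state a b r) (and_init a b) s u =
  wxor (wand (a u) (b u)) (\big[@wxor w/wzero w]_(p <- s) and_incr a b r p u).
Proof.
move=> sub_s; rewrite (@foldl_pointwise_xor _ _ _ _ (and_incr a b r)) ?ffunE //.
by move=> p c' u' /sub_s /pair_neq; apply: and_stateE.
Qed.

Lemma size_SecAND a b r : size (SecAND a b r).2 = n + 7 * size (pairs n).
Proof.
by rewrite SecAND_traced (size_foldl_trace _ (@size_and_wires a b r)) size_map size_enum_ord.
Qed.

Lemma nth_SecAND_prod a b r (i : 'I_n) :
  nth (wzero w) (SecAND a b r).2 i = wand (a i) (b i).
Proof.
rewrite SecAND_traced nth_foldl_trace_prefix; last by rewrite size_map size_enum_ord.
by rewrite (nth_map i) ?size_enum_ord // nth_ord_enum.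
Qed.

Lemma nth_SecAND_step a b r p k : p \in pairs n -> k < 7 ->
  nth (wzero w) (SecAND a b r).2 (n + (7 * index p (pairs n) + k)) =
  nth (wzero w) (and_wires a b r
    (foldl (and_state a b r) (and_init a b) (take (index p (pairs n)) (pairs n))) p) k.
Proof.
move=> Pp lt_k7; rewrite SecAND_traced addnA.
have := nth_foldl_trace _ (@size_and_wires a b r) (wzero w) p (and_init a b)
  [seq wand (a i) (b i) | i <- enum 'I_n] (s := pairs n) (m := index p (pairs n)) (k := k).
by rewrite size_map size_enum_ord nth_index // => ->; rewrite ?index_mem.
Qed.

Definition ref_state r c p := (ref_step r (c, [::]) p).1.
Definition ref_wires r c p := (ref_step r (c, [::]) p).2.
Definition ref_incr r p u := if touches p u then r p else wzero w.

Lemma ref_incr_radd r d p u : ref_incr (radd r d) p u = wxor (ref_incr r p u) (ref_incr d p u).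
Proof. by rewrite /ref_incr ffunE; case: ifP; rewrite ?wxorw0. Qed.

Lemma StrongRefresh_traced x r : StrongRefresh x r =
  foldl (trace_step (ref_state r) (ref_wires r)) (x, [::]) (pairs n).
Proof. by apply: eq_foldl => -[c tr] [i j]. Qed.

Lemma size_ref_wires r c p : size (ref_wires r c p) = 3.
Proof. by case: p. Qed.

Lemma ref_stateE r c p u : p.1 != p.2 -> ref_state r c p u = wxor (c u) (ref_incr r p u).
Proof.
case: p => i j /= Dij; rewrite /ref_state /ref_incr /touches /= !ffunE.
case: (eqVneq u j) => [->|_]; first by rewrite eq_sym (negbTE Dij) orbT.
by case: (eqVneq u i) => [->|_]; rewrite ?eqxx ?wxorw0.
Qed.

Lemma ref_wiresE r c p : p.1 != p.2 ->
  ref_wires r c p = [:: r p; ref_state r c p p.1; ref_state r c p p.2].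
Proof.
case: p => i j /= Dij; rewrite /ref_wires /ref_state /= !ffunE.
by rewrite eqxx [j == i]eq_sym (negbTE Dij) eqxx.
Qed.

Lemma ref_state_pairs r x s u : {subset s <= pairs n} ->
  foldl (ref_state r) x s u = wxor (x u) (\big[@wxor w/wzero w]_(p <- s) ref_incr r p u).
Proof.
move=> sub_s; apply: foldl_pointwise_xor => p c' u' /sub_s /pair_neq.
exact: ref_stateE.
Qed.

Lemma size_StrongRefresh x r : size (StrongRefresh x r).2 = 3 * size (pairs n).
Proof. by rewrite StrongRefresh_traced (size_foldl_trace _ (@size_ref_wires r)). Qed.

Lemma nth_StrongRefresh_step x r p k : p \in pairs n -> k < 3 ->
  nth (wzero w) (StrongRefresh x r).2 (3 * index p (pairs n) + k) =
  nth (wzero w) (ref_wires r (foldl (ref_state r) x (take (index p (pairs n)) (pairs n))) p) k.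
Proof.
move=> Pp lt_k3; rewrite StrongRefresh_traced.
have := nth_foldl_trace _ (@size_ref_wires r) (wzero w) p x [::]
  (s := pairs n) (m := index p (pairs n)) (k := k).
by rewrite nth_index // => ->; rewrite ?index_mem.
Qed.

End Gadgets.

(** * Simulation of SecAND and StrongRefresh *)

Section SecANDSimulation.
Variables (n w : nat) (a1 b1 a2 b2 : 'I_n -> word w) (V A B : {set 'I_n}).
Variable probed : 'I_n * 'I_n -> nat -> bool.
Hypotheses (a_agree : {in A, a1 =1 a2}) (b_agree : {in B, b1 =1 b2}).
Hypothesis sub_V : V \subset A :&: B.

(* [probed p k]: wire [k] of step [p], numbered as in [and_wiresE], is probed.
   A probe of wire 2 ([r_p + a_i b_j]) is charged to [i], unless [r_p] is
   probed or [c_i] is reproduced: then [i] is charged already, the shift of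
   [r_p] vanishes and [a_i b_j] must be exact, so the probe is charged to [j]. *)
Definition middle_share (p : 'I_n * 'I_n) :=
  if probed p 0 || (p.1 \in V) then p.2 else p.1.

Hypothesis cover0 : {in pairs n, forall p, probed p 0 -> p.1 \in A :&: B}.
Hypothesis cover1 : {in pairs n, forall p, probed p 1 -> (p.1 \in A) && (p.2 \in B)}.
Hypothesis cover2 : {in pairs n, forall p, probed p 2 -> middle_share p \in A :&: B}.
Hypothesis cover3 : {in pairs n, forall p, probed p 3 -> (p.2 \in A) && (p.1 \in B)}.
Hypothesis cover4 : {in pairs n, forall p, probed p 4 -> p.2 \in A :&: B}.
Hypothesis cover5 : {in pairs n, forall p, probed p 5 -> p.1 \in V}.
Hypothesis cover6 : {in pairs n, forall p, probed p 6 -> p.2 \in V}.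

Definition dprod i j := wxor (wand (a1 i) (b1 j)) (wand (a2 i) (b2 j)).

(* Shifting [r_p] by [and_mask p] keeps [r_p] and [c_i] unchanged whenever they
   are observed, and otherwise makes wire 2, or wire 4 and [c_j], agree. *)
Definition and_mask : rnd n w := [ffun p =>
  if probed p 0 || (p.1 \in V) then wzero w
  else if probed p 4 || (p.2 \in V) then wxor (dprod p.1 p.2) (dprod p.2 p.1)
  else dprod p.1 p.2].

Lemma dprod0 i j : i \in A :&: B -> j \in A :&: B -> dprod i j = wzero w.
Proof.
rewrite /dprod !inE => /andP[/a_agree-> _] /andP[_ /b_agree->]; exact: wxorvv.
Qed.

Lemma cross_dprod p :
  wxor (cross a1 b1 p) (cross a2 b2 p) = wxor (dprod p.1 p.2) (dprod p.2 p.1).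
Proof. by rewrite /cross /dprod; bitblast. Qed.

Lemma first_share_AB p : p \in pairs n -> probed p 0 || (p.1 \in V) -> p.1 \in A :&: B.
Proof. by move=> Pp /orP[/(cover0 Pp)|/(subsetP sub_V)]. Qed.

Lemma second_share_AB p : p \in pairs n -> probed p 4 || (p.2 \in V) -> p.2 \in A :&: B.
Proof. by move=> Pp /orP[/(cover4 Pp)|/(subsetP sub_V)]. Qed.

Lemma and_mask_cross p : p \in pairs n -> probed p 4 || (p.2 \in V) ->
  and_mask p = wxor (dprod p.1 p.2) (dprod p.2 p.1).
Proof.
move=> Pp p4; have p2AB := second_share_AB Pp p4.
rewrite ffunE p4; case: ifP => // /(first_share_AB Pp) p1AB.
by rewrite !dprod0 // wxorw0.
Qed.

Lemma and_mask_middle p : p \in pairs n -> probed p 2 -> and_mask p = dprod p.1 p.2.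
Proof.
move=> Pp /(cover2 Pp); rewrite /middle_share ffunE.
case: ifP => [/(first_share_AB Pp) p1AB p2AB | _ p1AB]; first by rewrite dprod0.
case: ifP => // /(second_share_AB Pp) p2AB.
by rewrite !dprod0 // wxorw0.
Qed.

Lemma and_incr_mask r p u : p \in pairs n -> u \in V ->
  and_incr a1 b1 r p u = and_incr a2 b2 (radd r and_mask) p u.
Proof.
move=> Pp uV; rewrite /and_incr ffunE.
case: (eqVneq u p.1) => [Eu|_].
  by rewrite ffunE -Eu uV orbT wxorw0.
case: (eqVneq u p.2) => [Eu|_] //.
rewrite and_mask_cross //; last by rewrite -Eu uV orbT.
by rewrite -cross_dprod /cross; bitblast.
Qed.

Lemma and_state_agree r s u : {subset s <= pairs n} -> u \in V ->
  foldl (and_state a1 b1 r) (and_init a1 b1) s u =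
  foldl (and_state a2 b2 (radd r and_mask)) (and_init a2 b2) s u.
Proof.
move=> sub_s uV; rewrite !and_state_pairs //.
have := subsetP sub_V u uV; rewrite inE => /andP[uA uB].
rewrite a_agree // b_agree //; congr wxor.
by apply: eq_big_seq => p /sub_s Pp; apply: and_incr_mask.
Qed.

Lemma and_wires_agree r (c1 c2 : {ffun 'I_n -> word w}) p k :
  p \in pairs n -> k < 7 -> probed p k -> {in V, c1 =1 c2} ->
  nth (wzero w) (and_wires a1 b1 r c1 p) k =
  nth (wzero w) (and_wires a2 b2 (radd r and_mask) c2 p) k.
Proof.
move=> Pp lt_k7 pk c12; have Dp := pair_neq Pp.
rewrite !and_wiresE //.
case: k lt_k7 pk => [|[|[|[|[|[|[|k]]]]]]] //= _ pk.
- by rewrite !ffunE pk wxorw0.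
- by case/andP: (cover1 Pp pk) => /a_agree-> /b_agree->.
- by rewrite ffunE and_mask_middle // /dprod; bitblast.
- by case/andP: (cover3 Pp pk) => /a_agree-> /b_agree->.
- rewrite ffunE and_mask_cross ?pk // -cross_dprod.
  by rewrite /cross; bitblast.
- have uV := cover5 Pp pk.
  by rewrite !and_stateE // c12 // and_incr_mask.
- have uV := cover6 Pp pk.
  by rewrite !and_stateE // c12 // and_incr_mask.
Qed.

Lemma SecAND_out_agree r u : u \in V ->
  (SecAND a1 b1 r).1 u = (SecAND a2 b2 (radd r and_mask)).1 u.
Proof. by move=> uV; rewrite !SecAND_traced !foldl_trace_state and_state_agree. Qed.

Lemma SecAND_step_agree r p k : p \in pairs n -> k < 7 -> probed p k ->
  nth (wzero w) (SecAND a1 b1 r).2 (n + (7 * index p (pairs n) + k)) =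
  nth (wzero w) (SecAND a2 b2 (radd r and_mask)).2 (n + (7 * index p (pairs n) + k)).
Proof.
move=> Pp lt_k7 pk; rewrite !nth_SecAND_step //.
by apply: and_wires_agree => // u; apply: and_state_agree => q /mem_take.
Qed.

End SecANDSimulation.

Section RefreshSimulation.
Variables (n w : nat) (s1 s2 : {ffun 'I_n -> word w}) (J : {set 'I_n}) (O : seq 'I_n).
Variables (h : 'I_n) (probed : 'I_n * 'I_n -> nat -> bool).
Hypotheses (s_agree : {in J, s1 =1 s2}) (hJ : h \notin J) (hO : h \notin O).
Hypothesis cover0 : {in pairs n, forall p, probed p 0 -> touches p h -> other p h \notin O}.
Hypothesis cover1 : {in pairs n, forall p, probed p 1 -> p.1 \in J}.
Hypothesis cover2 : {in pairs n, forall p, probed p 2 -> p.2 \in J}.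

(* Output share [i] is corrected through the randomness of the pair [{i, h}];
   as [h] is neither probed nor an output, no other observed value changes. *)
Definition ref_mask : rnd n w := [ffun p =>
  if touches p h && (other p h \in O) then wxor (s1 (other p h)) (s2 (other p h))
  else wzero w].

Lemma ref_mask_J p u : u \in J -> touches p u -> ref_mask p = wzero w.
Proof.
move=> uJ tpu; rewrite ffunE; case: ifP => // /andP[tph _].
have Duh : u != h by apply: contraNneq hJ => <-.
by rewrite (other_touches Duh) // s_agree // wxorvv.
Qed.

Lemma ref_incr_mask r p u : u \in J -> ref_incr r p u = ref_incr (radd r ref_mask) p u.
Proof.
by move=> uJ; rewrite /ref_incr ffunE; case: ifP => // tpu; rewrite (ref_mask_J uJ tpu) wxorw0.
Qed.

Lemma ref_state_agree r s u : {subset s <= pairs n} -> u \in J ->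
  foldl (ref_state r) s1 s u = foldl (ref_state (radd r ref_mask)) s2 s u.
Proof.
move=> sub_s uJ; rewrite !ref_state_pairs // s_agree //; congr wxor.
by apply: eq_bigr => p _; apply: ref_incr_mask.
Qed.

Lemma ref_mask_sum i : i \in O ->
  \big[@wxor w/wzero w]_(p <- pairs n) ref_incr ref_mask p i = wxor (s1 i) (s2 i).
Proof.
move=> iO; have Dih : i != h by apply: contraNneq hO => <-.
have /andP[ti th] := touches_pair_of i h.
rewrite (bigD1_seq (pair_of i h)) ?pair_of_pairs ?uniq_pairs //= big1_seq => [|p].
  by rewrite wxorw0 /ref_incr ti ffunE th (other_touches Dih) ?iO.
case/andP=> Dp Pp; rewrite /ref_incr ffunE; case: ifP => // tpi.
case: ifP => // /andP[tph _]; move: Dp.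
by rewrite (touches2_pair_of Pp Dih tpi tph) eqxx.
Qed.

Lemma ref_out_agree r i : i \in O ->
  (StrongRefresh s1 r).1 i = (StrongRefresh s2 (radd r ref_mask)).1 i.
Proof.
move=> iO; rewrite !StrongRefresh_traced !foldl_trace_state !ref_state_pairs //.
under [in RHS]eq_bigr do rewrite ref_incr_radd.
by rewrite big_split /= ref_mask_sum //; bitblast.
Qed.

Lemma ref_wires_agree r (c1 c2 : {ffun 'I_n -> word w}) p k :
  p \in pairs n -> k < 3 -> probed p k -> {in J, c1 =1 c2} ->
  nth (wzero w) (ref_wires r c1 p) k = nth (wzero w) (ref_wires (radd r ref_mask) c2 p) k.
Proof.
move=> Pp lt_k3 pk c12; have Dp := pair_neq Pp.
rewrite !ref_wiresE //.
case: k lt_k3 pk => [|[|[|k]]] //= _ pk.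
- rewrite !ffunE; case: ifP => [/andP[tph]|_]; last by rewrite wxorw0.
  by rewrite (negbTE (cover0 Pp pk tph)).
- have uJ := cover1 Pp pk.
  by rewrite !ref_stateE // c12 // ref_incr_mask.
- have uJ := cover2 Pp pk.
  by rewrite !ref_stateE // c12 // ref_incr_mask.
Qed.

Lemma StrongRefresh_step_agree r p k : p \in pairs n -> k < 3 -> probed p k ->
  nth (wzero w) (StrongRefresh s1 r).2 (3 * index p (pairs n) + k) =
  nth (wzero w) (StrongRefresh s2 (radd r ref_mask)).2 (3 * index p (pairs n) + k).
Proof.
move=> Pp lt_k3 pk; rewrite !nth_StrongRefresh_step //.
by apply: ref_wires_agree => // u; apply: ref_state_agree => q /mem_take.
Qed.

End RefreshSimulation.

(** * Wires of SecCondAdd and the charged shares *)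

Lemma nth_cat_addn (T : Type) (x0 : T) s1 s2 a k :
  size s1 = a -> nth x0 (s1 ++ s2) (a + k) = nth x0 s2 k.
Proof. by move=> <-; rewrite nth_cat ltnNge leq_addr /= addKn. Qed.

Lemma nth_cat_small (T : Type) (x0 : T) s1 s2 k :
  k < size s1 -> nth x0 (s1 ++ s2) k = nth x0 s1 k.
Proof. by move=> lt_k; rewrite nth_cat lt_k. Qed.

Lemma nth_flatten_map (T I : Type) (x0 : T) (i0 : I) (F : I -> seq T) K s j o :
  (forall i, size (F i) = K) -> o < K -> j < size s ->
  nth x0 (flatten (map F s)) (j * K + o) = nth x0 (F (nth i0 s j)) o.
Proof.
move=> size_F lt_o; elim: s j => //= i s IH [|j] lt_j.
  by rewrite mul0n add0n nth_cat size_F lt_o.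
by rewrite nth_cat size_F ltnNge mulSn -addnA leq_addr /= addKn IH.
Qed.

Lemma size_flatten_map (T I : Type) (F : I -> seq T) K s :
  (forall i, size (F i) = K) -> size (flatten (map F s)) = size s * K.
Proof. by move=> size_F; elim: s => //= i s IH; rewrite size_cat IH size_F mulSn. Qed.

Section CoordinateWires.
Variables (n w l : nat).
Local Notation N := (size (pairs n)).
Implicit Types (xs ys : {ffun 'I_n -> vec w l}) (bs : {ffun 'I_n -> bool}) (p : 'I_n * 'I_n).

Definition coord_size := n + (n + 7 * N + (n + 3 * N)).
Definition prod_pos (i : 'I_n) := n + i.
Definition and_pos p k := n + (n + (7 * index p (pairs n) + k)).
Definition sum_pos (i : 'I_n) := n + (n + 7 * N + i).
Definition ref_pos p k := n + (n + 7 * N + (n + (3 * index p (pairs n) + k))).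

Lemma and_pos_lt p k : p \in pairs n -> k < 7 -> and_pos p k < coord_size.
Proof. by move=> /index_pairs_lt ltm lt_k; rewrite /and_pos /coord_size; lia. Qed.

Lemma ref_pos_lt p k : p \in pairs n -> k < 3 -> ref_pos p k < coord_size.
Proof. by move=> /index_pairs_lt ltm lt_k; rewrite /ref_pos /coord_size; lia. Qed.

Definition bit_words bs i := wrep w (bs i).

Definition sum_sharing xs ys bs (j : 'I_l) (r : rnd n w) : {ffun 'I_n -> word w} :=
  [ffun i => wxor (xs i j) ((SecAND (fun i => ys i j) (bit_words bs) r).1 i)].

Lemma coordE xs ys bs rho j :
  coord (xs, ys, bs) rho j =
  ((StrongRefresh (sum_sharing xs ys bs j (rho j).1) (rho j).2).1,
   [seq bit_words bs i | i <- enum 'I_n] ++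
   (SecAND (fun i => ys i j) (bit_words bs) (rho j).1).2 ++
   [seq sum_sharing xs ys bs j (rho j).1 i | i <- enum 'I_n] ++
   (StrongRefresh (sum_sharing xs ys bs j (rho j).1) (rho j).2).2).
Proof.
rewrite /coord /sum_sharing /bit_words.
case: (SecAND _ _ _) => c tr /=.
by case: (StrongRefresh _ _) => y tr'.
Qed.

Lemma size_coord_wires (inp : inputs n w l) rho j : size (coord inp rho j).2 = coord_size.
Proof.
case: inp => [[xs ys] bs]; rewrite coordE /= !size_cat !size_map -enumT size_enum_ord.
by rewrite size_SecAND size_StrongRefresh /coord_size addnA.
Qed.

Lemma nth_coord_bit xs ys bs rho j (i : 'I_n) :
  nth (wzero w) (coord (xs, ys, bs) rho j).2 i = bit_words bs i.
Proof.
rewrite coordE nth_cat_small ?size_map -?enumT ?size_enum_ord //.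
by rewrite (nth_map i) -?enumT ?size_enum_ord // nth_ord_enum.
Qed.

Lemma nth_coord_prod xs ys bs rho j i :
  nth (wzero w) (coord (xs, ys, bs) rho j).2 (prod_pos i) = wand (ys i j) (bit_words bs i).
Proof.
rewrite coordE nth_cat_addn ?size_map -?enumT ?size_enum_ord //.
by rewrite nth_cat_small ?nth_SecAND_prod // size_SecAND ltn_addr.
Qed.

Lemma nth_coord_and xs ys bs rho j p k : p \in pairs n -> k < 7 ->
  nth (wzero w) (coord (xs, ys, bs) rho j).2 (and_pos p k) =
  nth (wzero w) (SecAND (fun i => ys i j) (bit_words bs) (rho j).1).2
    (n + (7 * index p (pairs n) + k)).
Proof.
move=> Pp lt_k7; have ltm := index_pairs_lt Pp.
rewrite coordE nth_cat_addn ?size_map -?enumT ?size_enum_ord // nth_cat_small //.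
by rewrite size_SecAND ltn_add2l; lia.
Qed.

Lemma nth_coord_sum xs ys bs rho j i :
  nth (wzero w) (coord (xs, ys, bs) rho j).2 (sum_pos i) = sum_sharing xs ys bs j (rho j).1 i.
Proof.
rewrite coordE nth_cat_addn ?size_map -?enumT ?size_enum_ord // nth_cat_addn ?size_SecAND //.
rewrite nth_cat_small ?size_map -?enumT ?size_enum_ord //.
by rewrite (nth_map i) -?enumT ?size_enum_ord // nth_ord_enum.
Qed.

Lemma nth_coord_ref xs ys bs rho j p k :
  nth (wzero w) (coord (xs, ys, bs) rho j).2 (ref_pos p k) =
  nth (wzero w) (StrongRefresh (sum_sharing xs ys bs j (rho j).1) (rho j).2).2
    (3 * index p (pairs n) + k).
Proof.
rewrite coordE nth_cat_addn ?size_map -?enumT ?size_enum_ord // nth_cat_addn ?size_SecAND //.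
by rewrite nth_cat_addn ?size_map -?enumT ?size_enum_ord.
Qed.

End CoordinateWires.

Section ProbedShares.
Variables (t : nat) (P : seq nat) (O : seq 'I_t.+1).
Local Notation n := t.+1.
Local Notation N := (size (pairs n)).
Local Notation Lc := (coord_size n).

(* The wires of one coordinate, in order: the words [b_i^[w:1]], the products
   [y_i b_i] initialising SecAND, its steps, the sums [s_i] and the refresh
   steps. *)
Inductive wire :=
  WBit of 'I_n | WProd of 'I_n | WAnd of 'I_n * 'I_n & nat
| WSum of 'I_n | WRef of 'I_n * 'I_n & nat.

Definition wire_at o : wire :=
  let p_at m := nth (ord0, ord0) (pairs n) m in
  if o < n then WBit (inord o) else
  let o1 := o - n in
  if o1 < n then WProd (inord o1) else
  if o1 < n + 7 * N then WAnd (p_at ((o1 - n) %/ 7)) ((o1 - n) %% 7) else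
  let o2 := o1 - (n + 7 * N) in
  if o2 < n then WSum (inord o2) else WRef (p_at ((o2 - n) %/ 3)) ((o2 - n) %% 3).

Variant wire_at_spec (o : nat) : wire -> Prop :=
| WireBit (i : 'I_n) of o = i : wire_at_spec o (WBit i)
| WireProd i of o = prod_pos i : wire_at_spec o (WProd i)
| WireAnd p k of p \in pairs n & k < 7 & o = and_pos p k : wire_at_spec o (WAnd p k)
| WireSum i of o = sum_pos i : wire_at_spec o (WSum i)
| WireRef p k of p \in pairs n & k < 3 & o = ref_pos p k : wire_at_spec o (WRef p k).

Lemma nth_pairs_index m : m < N -> index (nth (ord0, ord0) (pairs n) m) (pairs n) = m.
Proof. by move=> ltm; rewrite index_uniq ?uniq_pairs. Qed.

Lemma wire_atP o : o < Lc -> wire_at_spec o (wire_at o).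
Proof.
rewrite /wire_at /coord_size => lt_o.
case: ifP => [lt_o0|ge_o0]; first by apply: WireBit; rewrite inordK.
case: ifP => [lt_o1|ge_o1]; first by apply: WireProd; rewrite /prod_pos inordK; lia.
case: ifP => [lt_o2|ge_o2].
  have ltm : (o - n - n) %/ 7 < N by rewrite ltn_divLR //; lia.
  apply: WireAnd; rewrite /and_pos ?mem_nth ?ltn_mod ?nth_pairs_index //.
  by have := divn_eq (o - n - n) 7; lia.
case: ifP => [lt_o3|ge_o3]; first by apply: WireSum; rewrite /sum_pos inordK; lia.
have ltm : (o - n - (n + 7 * N) - n) %/ 3 < N by rewrite ltn_divLR //; lia.
apply: WireRef; rewrite /ref_pos ?mem_nth ?ltn_mod ?nth_pairs_index //.
by have := divn_eq (o - n - (n + 7 * N) - n) 3; lia.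
Qed.

Lemma wire_at_and p k : p \in pairs n -> k < 7 -> wire_at (and_pos p k) = WAnd p k.
Proof.
move=> Pp lt_k7; have ltm := index_pairs_lt Pp.
rewrite /wire_at /and_pos ifN; last by lia.
rewrite addKn ifN; last by lia.
rewrite ifT; last by lia.
by rewrite addKn [7 * _]mulnC divnMDl // modnMDl divn_small // modn_small // addn0 nth_index.
Qed.

Lemma wire_at_ref p k : p \in pairs n -> k < 3 -> wire_at (ref_pos p k) = WRef p k.
Proof.
move=> Pp lt_k3; have ltm := index_pairs_lt Pp.
rewrite /wire_at /ref_pos ifN; last by lia.
rewrite addKn ifN; last by lia.
rewrite ifN; last by lia.
rewrite addKn ifN; last by lia.
by rewrite addKn [3 * _]mulnC divnMDl // modnMDl divn_small // modn_small // addn0 nth_index.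
Qed.

Lemma coord_size_gt0 : 0 < Lc.
Proof. by rewrite /coord_size; lia. Qed.

Lemma divn_coord j o : o < Lc -> (j * Lc + o) %/ Lc = j.
Proof. by move=> lt_o; rewrite divnMDl ?coord_size_gt0 // divn_small ?addn0. Qed.

Lemma modn_coord j o : o < Lc -> (j * Lc + o) %% Lc = o.
Proof. by move=> lt_o; rewrite modnMDl modn_small. Qed.

(* The wire list of SecCondAdd consists of one block of [Lc] wires per
   coordinate, so probe [q] lies in coordinate [q %/ Lc]. *)
Definition probe_wire q := wire_at (q %% Lc).

Definition and_probed j (p : 'I_n * 'I_n) k := j * Lc + and_pos p k \in P.
Definition ref_probed j (p : 'I_n * 'I_n) k := j * Lc + ref_pos p k \in P.

Definition shares (g : nat -> option 'I_n) := [set i | Some i \in map g P].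

Lemma mem_shares g q i : q \in P -> g q = Some i -> i \in shares g.
Proof. by move=> Pq gq; rewrite inE -gq map_f. Qed.

Lemma card_shares g : #|shares g| <= size P.
Proof.
apply: leq_trans (_ : #|pmap id (map g P)| <= _).
  by apply: subset_leq_card; apply/subsetP => i; rewrite inE mem_pmap map_id.
by rewrite (leq_trans (card_size _)) // size_pmap (leq_trans (count_size _ _)) ?size_map.
Qed.

Definition x_share q :=
  match probe_wire q with
  | WSum i => Some i
  | WRef p 1 => Some p.1
  | WRef p 2 => Some p.2
  | _ => None
  end.

(* The shares whose SecAND partial sums [c_i] must be reproduced. *)
Definition c_share q :=
  if x_share q is Some i then Some i else
  match probe_wire q with
  | WProd i => Some i
  | WAnd p 5 => Some p.1
  | WAnd p 6 => Some p.2
  | _ => None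
  end.

Definition x_shares := shares x_share.
Definition c_shares := shares c_share.

Definition y_share q :=
  if c_share q is Some i then Some i else
  match probe_wire q with
  | WAnd p 0 | WAnd p 1 => Some p.1
  | WAnd p 2 => Some (middle_share c_shares (and_probed (q %/ Lc)) p)
  | WAnd p 3 | WAnd p 4 => Some p.2
  | _ => None
  end.

Definition b_share q :=
  if c_share q is Some i then Some i else
  match probe_wire q with
  | WBit i => Some i
  | WAnd p 0 | WAnd p 3 => Some p.1
  | WAnd p 2 => Some (middle_share c_shares (and_probed (q %/ Lc)) p)
  | WAnd p 1 | WAnd p 4 => Some p.2
  | _ => None
  end.

Definition y_shares := shares y_share.
Definition b_shares := shares b_share.

(* The untouched share index [h] used to fix the outputs must avoid the output
   probes, the probed sums, and the partner of an output share in a probed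
   refresh randomness. *)
Definition busy_share q :=
  if x_share q is Some i then Some i else
  match probe_wire q with
  | WRef p 0 => if p.1 \in O then Some p.2 else if p.2 \in O then Some p.1 else None
  | _ => None
  end.

Definition busy_shares := [set i | (i \in O) || (Some i \in map busy_share P)].

Lemma card_busy_shares : #|busy_shares| <= size O + size P.
Proof.
apply: leq_trans (_ : #|O ++ pmap id (map busy_share P)| <= _).
  by apply: subset_leq_card; apply/subsetP => i; rewrite !inE mem_cat mem_pmap map_id.
rewrite (leq_trans (card_size _)) // size_cat leq_add2l size_pmap.
by rewrite (leq_trans (count_size _ _)) ?size_map.
Qed.

Lemma x_shares_sub_c : x_shares \subset c_shares.
Proof.
apply/subsetP => i; rewrite !inE => /mapP[q Pq Eq]; apply/mapP; exists q => //.
by rewrite /c_share -Eq.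
Qed.

Lemma c_shares_sub_yb : c_shares \subset y_shares :&: b_shares.
Proof.
apply/subsetP => i; rewrite !inE => /mapP[q Pq Eq].
by apply/andP; split; apply/mapP; exists q; rewrite // /y_share /b_share -Eq.
Qed.

Lemma O_sub_busy i : i \in O -> i \in busy_shares.
Proof. by rewrite inE => ->. Qed.

Lemma x_shares_sub_busy : x_shares \subset busy_shares.
Proof.
apply/subsetP => i; rewrite !inE => /mapP[q Pq Eq]; apply/orP; right.
by apply/mapP; exists q; rewrite // /busy_share -Eq.
Qed.

Section Covers.
Variable j : nat.

Lemma and_probe_share g i p k : p \in pairs n -> k < 7 -> and_probed j p k ->
  (forall q, probe_wire q = WAnd p k -> q %/ Lc = j -> g q = Some i) -> i \in shares g.
Proof.
move=> Pp lt_k7 pk gq; have lt_o := and_pos_lt Pp lt_k7.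
by apply: (mem_shares pk); rewrite gq /probe_wire ?modn_coord ?divn_coord ?wire_at_and.
Qed.

Lemma ref_probe_wire p k : p \in pairs n -> k < 3 -> ref_probed j p k ->
  exists2 q, q \in P & probe_wire q = WRef p k.
Proof.
move=> Pp lt_k3 pk; have lt_o := ref_pos_lt Pp lt_k3.
by exists (j * Lc + ref_pos p k); rewrite // /probe_wire modn_coord // wire_at_ref.
Qed.

Lemma and_cover0 : {in pairs n, forall p, and_probed j p 0 -> p.1 \in y_shares :&: b_shares}.
Proof.
move=> p Pp pk; rewrite in_setI; apply/andP; split;
  apply: (and_probe_share Pp _ pk) => // q;
  by rewrite /y_share /b_share /c_share /x_share => -> _.
Qed.

Lemma and_cover1 :
  {in pairs n, forall p, and_probed j p 1 -> (p.1 \in y_shares) && (p.2 \in b_shares)}.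
Proof.
move=> p Pp pk; apply/andP; split;
  apply: (and_probe_share Pp _ pk) => // q;
  by rewrite /y_share /b_share /c_share /x_share => -> _.
Qed.

Lemma and_cover2 : {in pairs n, forall p, and_probed j p 2 ->
  middle_share c_shares (and_probed j) p \in y_shares :&: b_shares}.
Proof.
move=> p Pp pk; rewrite in_setI; apply/andP; split;
  apply: (and_probe_share Pp _ pk) => // q;
  by rewrite /y_share /b_share /c_share /x_share => -> ->.
Qed.

Lemma and_cover3 :
  {in pairs n, forall p, and_probed j p 3 -> (p.2 \in y_shares) && (p.1 \in b_shares)}.
Proof.
move=> p Pp pk; apply/andP; split;
  apply: (and_probe_share Pp _ pk) => // q;
  by rewrite /y_share /b_share /c_share /x_share => -> _.
Qed.

Lemma and_cover4 : {in pairs n, forall p, and_probed j p 4 -> p.2 \in y_shares :&: b_shares}.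
Proof.
move=> p Pp pk; rewrite in_setI; apply/andP; split;
  apply: (and_probe_share Pp _ pk) => // q;
  by rewrite /y_share /b_share /c_share /x_share => -> _.
Qed.

Lemma and_cover5 : {in pairs n, forall p, and_probed j p 5 -> p.1 \in c_shares}.
Proof.
move=> p Pp pk; apply: (and_probe_share Pp _ pk) => // q.
by rewrite /c_share /x_share => -> _.
Qed.

Lemma and_cover6 : {in pairs n, forall p, and_probed j p 6 -> p.2 \in c_shares}.
Proof.
move=> p Pp pk; apply: (and_probe_share Pp _ pk) => // q.
by rewrite /c_share /x_share => -> _.
Qed.

Lemma ref_cover0 h : h \notin busy_shares ->
  {in pairs n, forall p, ref_probed j p 0 -> touches p h -> other p h \notin O}.
Proof.
move=> hX p Pp /(@ref_probe_wire p 0 Pp isT) [q Pq Eq].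
have busy i : busy_share q = Some i -> i \in busy_shares.
  by move=> Eb; rewrite inE -Eb map_f ?orbT.
have hO : h \notin O by apply: contra hX; apply: O_sub_busy.
rewrite /busy_share /x_share Eq in busy.
rewrite /touches /other; case: (eqVneq p.1 h) => [E1|_] /= => [_|/eqP E2].
  case: ifP busy => [|_]; first by rewrite E1 (negbTE hO).
  by case: ifP => // _ /(_ _ erefl); rewrite E1 (negbTE hX).
by case: ifP busy => // _ /(_ _ erefl); rewrite E2 (negbTE hX).
Qed.

Lemma ref_cover1 : {in pairs n, forall p, ref_probed j p 1 -> p.1 \in x_shares}.
Proof.
move=> p Pp /(@ref_probe_wire p 1 Pp isT) [q Pq Eq].
by rewrite (mem_shares Pq) // /x_share Eq.
Qed.

Lemma ref_cover2 : {in pairs n, forall p, ref_probed j p 2 -> p.2 \in x_shares}.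
Proof.
move=> p Pp /(@ref_probe_wire p 2 Pp isT) [q Pq Eq].
by rewrite (mem_shares Pq) // /x_share Eq.
Qed.

End Covers.

End ProbedShares.

(** * Composition *)

Section Composition.
Variables (t w l : nat) (P : seq nat) (O : seq 'I_t.+1).
Local Notation n := t.+1.
Local Notation Lc := (coord_size n).
Local Notation Ix := (x_shares t P).
Local Notation Ic := (c_shares t P).
Local Notation Iy := (y_shares t P).
Local Notation Ib := (b_shares t P).
Local Notation Ibusy := (busy_shares P O).

Variables (x1 y1 x2 y2 : {ffun 'I_n -> vec w l}) (b1 b2 : {ffun 'I_n -> bool}) (h : 'I_n).
Hypotheses (x_agree : {in Ix, x1 =1 x2}) (y_agree : {in Iy, y1 =1 y2}).
Hypotheses (b_agree : {in Ib, b1 =1 b2}) (h_free : h \notin Ibusy).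

Lemma y_agree_coord (j : 'I_l) : {in Iy, (fun i => y1 i j) =1 (fun i => y2 i j)}.
Proof. by move=> i /y_agree ->. Qed.

Lemma b_agree_words : {in Ib, bit_words w b1 =1 bit_words w b2}.
Proof. by move=> i /b_agree; rewrite /bit_words => ->. Qed.

Lemma h_notin_x_shares : h \notin Ix.
Proof. by apply: contra h_free; apply: (subsetP (x_shares_sub_busy P O)). Qed.

Lemma h_notin_O : h \notin O.
Proof. by apply: contra h_free; apply: O_sub_busy. Qed.

Definition and_shift (j : 'I_l) : rnd n w :=
  and_mask (fun i => y1 i j) (bit_words w b1) (fun i => y2 i j) (bit_words w b2) Ic
    (and_probed P j).

Definition ref_shift (j : 'I_l) (rA : rnd n w) : rnd n w :=
  ref_mask (sum_sharing x1 y1 b1 j rA) (sum_sharing x2 y2 b2 j (radd rA (and_shift j))) O h.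

Definition shift (rho : grnd n w l) : grnd n w l :=
  [ffun j => (radd (rho j).1 (and_shift j), radd (rho j).2 (ref_shift j (rho j).1))].

Lemma shiftE rho j :
  shift rho j = (radd (rho j).1 (and_shift j), radd (rho j).2 (ref_shift j (rho j).1)).
Proof. by rewrite ffunE. Qed.

Lemma shift_inj : injective shift.
Proof.
move=> rho rho' /ffunP E; apply/ffunP => j; move: (E j); rewrite !ffunE.
case: (rho j) (rho' j) => [rA rR] [rA' rR'] [/radd_inj EA]; rewrite EA => /radd_inj ER.
by rewrite ER.
Qed.

Ltac SecAND_hyps :=
  solve [ exact: y_agree_coord | exact: b_agree_words | exact: c_shares_sub_yb
        | exact: and_cover0 | exact: and_cover1 | exact: and_cover2 | exact: and_cover3
        | exact: and_cover4 | exact: and_cover5 | exact: and_cover6 ].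

Lemma sum_sharing_agree j rA :
  {in Ix, sum_sharing x1 y1 b1 j rA =1 sum_sharing x2 y2 b2 j (radd rA (and_shift j))}.
Proof.
move=> i iX; rewrite !ffunE x_agree //; congr wxor.
apply: (SecAND_out_agree (A := Iy) (B := Ib)); try SecAND_hyps.
exact: (subsetP (x_shares_sub_c t P)).
Qed.

Lemma coord_wire_agree rho (j : 'I_l) o : o < Lc -> j * Lc + o \in P ->
  nth (wzero w) (coord (x1, y1, b1) rho j).2 o =
  nth (wzero w) (coord (x2, y2, b2) (shift rho) j).2 o.
Proof.
move=> lt_o; have : probe_wire t (j * Lc + o) = wire_at t o by rewrite /probe_wire modn_coord.
case: (wire_atP lt_o) => [i -> | i -> | p k Pp lt_k7 -> | i -> | p k Pp lt_k3 ->] Eq Pq.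
- rewrite !nth_coord_bit b_agree_words //.
  by apply: (mem_shares Pq); rewrite /b_share /c_share /x_share Eq.
- have : i \in Ic by apply: (mem_shares Pq); rewrite /c_share /x_share Eq.
  move/(subsetP (c_shares_sub_yb t P)); rewrite in_setI => /andP[iY iB].
  by rewrite !nth_coord_prod y_agree // b_agree_words.
- rewrite !nth_coord_and // shiftE.
  by apply: (SecAND_step_agree (A := Iy) (B := Ib)); try SecAND_hyps.
- rewrite !nth_coord_sum shiftE sum_sharing_agree //.
  by apply: (mem_shares Pq); rewrite /x_share Eq.
- rewrite !nth_coord_ref shiftE.
  apply: (StrongRefresh_step_agree (J := Ix) (probed := ref_probed P j)) => //.
  + exact: sum_sharing_agree.
  + exact: h_notin_x_shares.
  + exact: ref_cover0 h_free.
  + exact: ref_cover1.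
  + exact: ref_cover2.
Qed.

Lemma SecCondAdd_wires_agree rho q : q \in P ->
  nth (wzero w) (SecCondAdd_wires (x1, y1, b1) rho) q =
  nth (wzero w) (SecCondAdd_wires (x2, y2, b2) (shift rho)) q.
Proof.
move=> Pq; rewrite /SecCondAdd_wires.
have size_wires (inp : inputs n w l) (rho' : grnd n w l) :
    size (flatten [seq (coord inp rho' j).2 | j <- enum 'I_l]) = l * Lc.
  by rewrite (@size_flatten_map _ _ _ Lc) ?size_enum_ord // => j; rewrite size_coord_wires.
case: (ltnP q (l * Lc)) => [lt_q | ge_q]; last by rewrite !nth_default ?size_wires.
have lt_j : q %/ Lc < l by rewrite ltn_divLR ?coord_size_gt0.
have lt_o : q %% Lc < Lc by rewrite ltn_mod coord_size_gt0.
move: Pq; rewrite (divn_eq q Lc) -[q %/ Lc]/(val (Ordinal lt_j)) => Pq.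
rewrite !(@nth_flatten_map _ _ _ (Ordinal lt_j) _ Lc) ?size_enum_ord ?nth_ord_enum //;
  try by move=> j; rewrite size_coord_wires.
exact: coord_wire_agree.
Qed.

Lemma SecCondAdd_out_agree rho i : i \in O ->
  SecCondAdd_out (x1, y1, b1) rho i = SecCondAdd_out (x2, y2, b2) (shift rho) i.
Proof.
move=> iO; apply/ffunP => j; rewrite !ffunE !coordE /= shiftE /=.
exact: (ref_out_agree _ _ h_notin_O _ iO).
Qed.

Lemma observe_shift rho : observe P O (x1, y1, b1) rho = observe P O (x2, y2, b2) (shift rho).
Proof.
rewrite /observe; congr pair; apply/eq_in_map => q Pq.
- exact: SecCondAdd_wires_agree.
- exact: SecCondAdd_out_agree.
Qed.

End Composition.

Lemma card_fiber_inj (T : finType) (U : eqType) (f g : T -> U) (phi : T -> T) :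
  injective phi -> f =1 g \o phi -> forall v, #|[pred x | f x == v]| = #|[pred x | g x == v]|.
Proof.
move=> phi_inj Efg v.
have -> : #|[pred x | f x == v]| = #|phi @^-1: [set x | g x == v]|.
  by apply: eq_card => x; rewrite !inE Efg.
by rewrite card_preimset // cardsE.
Qed.

Lemma card_observe_agree t w l (P : seq nat) (O : seq 'I_t.+1) (i1 i2 : inputs t.+1 w l) h :
  agree (x_shares t P) (y_shares t P) (b_shares t P) i1 i2 -> h \notin busy_shares P O ->
  forall v, #|[pred rho | observe P O i1 rho == v]| = #|[pred rho | observe P O i2 rho == v]|.
Proof.
case: i1 i2 => [[x1 y1] b1] [[x2 y2] b2] [x_agree y_agree b_agree] h_free.
by apply: (card_fiber_inj (shift_inj (h := h))) => rho; apply: observe_shift.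
Qed.

Lemma exists_free_share t (P : seq nat) (O : seq 'I_t.+1) :
  size P + size O <= t -> exists h, h \notin busy_shares P O.
Proof.
move=> size_PO; apply/existsP; rewrite -negb_forall; apply/negP => /forallP all_busy.
have busyT : busy_shares P O = [set: 'I_t.+1] by apply/setP => i; rewrite in_setT all_busy.
by have := card_busy_shares P O; rewrite busyT cardsT card_ord; lia.
Qed.

Section Restrict.
Variables (n w l : nat) (X Y B : {set 'I_n}).

Definition restrict (inp : inputs n w l) : inputs n w l :=
  let: (xs, ys, bs) := inp in
  ([ffun i => if i \in X then xs i else [ffun _ => wzero w]],
   [ffun i => if i \in Y then ys i else [ffun _ => wzero w]],
   [ffun i => (i \in B) && bs i]).

Lemma agree_restrict inp : agree X Y B inp (restrict inp).
Proof. by case: inp => [[xs ys] bs]; split=> i iI; rewrite ffunE iI. Qed.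

Lemma restrict_agree i1 i2 : agree X Y B i1 i2 -> restrict i1 = restrict i2.
Proof.
case: i1 i2 => [[x1 y1] b1] [[x2 y2] b2] [x_agree y_agree b_agree].
congr (_, _, _); apply/ffunP => i; rewrite !ffunE.
- by case: ifP => // /x_agree.
- by case: ifP => // /y_agree.
- by case: (boolP (i \in B)) => // /b_agree.
Qed.

End Restrict.

Theorem lemma1 (t q l : nat) :
  (1 <= t)%N ->
  (exists p e, [/\ prime p, (0 < e)%N & q = p ^ e]) ->
  SecCondAdd_SNI t t.+1 q l.
Proof.
move=> _ _ P O size_PO.
set X := x_shares t P; set Y := y_shares t P; set B := b_shares t P.
exists X, Y, B; split; first by split; apply: card_shares.
exists (grnd t.+1 (wlen q) l), (fun inp => observe P O (restrict X Y B inp)); split.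
- by apply/card_gt0P; exists [ffun _ => ([ffun _ => wzero _], [ffun _ => wzero _])].
- by move=> i1 i2 /restrict_agree ->.
- move=> inp _ v; have [h h_free] := exists_free_share (O := O) size_PO.
  by rewrite (card_observe_agree (agree_restrict X Y B inp) h_free).
Qed.
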